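(* The map $G$ is continuous on the metric space $(\mathcal{X},d)$.
   Context: Fix an integer $\mathsf{N}\ge 1$ and write $\llbracket a;b\rrbracket=\{a,a+1,\dots,b\}$. Let $f:\mathbb{Z}/4\mathbb{Z}\to\mathbb{Z}/4\mathbb{Z}$, $f(x)=x+1 \pmod 4$, with $f^{-1}(x)=x-1\pmod 4$ and $f^0=\mathrm{id}$. Let $\mathrm{sign}(x)=1$ if $x>0$, $0$ if $x=0$, $-1$ if $x<0$. For $k\in\llbracket -\mathsf{N};\mathsf{N}\rrbracket$ define $f_k:(\mathbb{Z}/4\mathbb{Z})^{\mathsf{N}}\to(\mathbb{Z}/4\mathbb{Z})^{\mathsf{N}}$ by $f_k(C_1,\dots,C_{\mathsf{N}})=(C_1,\dots,C_{|k|-1},f^{\mathrm{sign}(k)}(C_{|k|}),\dots,f^{\mathrm{sign}(k)}(C_{\mathsf{N}}))$ (so $f_0$ is the identity). Folding sequences are $F=(F^j)_{j\in\mathbb{N}}\in\llbracket -\mathsf{N};\mathsf{N}\rrbracket^{\mathbb{N}}$; let $i(F)=F^0$ and let $\sigma$ be the shift, $\sigma((F^j)_{j})=(F^{j+1})_{j}$. A finite sequence $(k_1,\dots,k_n)$ is identified with $(k_1,\dots,k_n,0,0,\dots)$. On $\check{\mathcal{X}}=(\mathbb{Z}/4\mathbb{Z})^{\mathsf{N}}\times\llbracket -\mathsf{N};\mathsf{N}\rrbracket^{\mathbb{N}}$ define $G((C,F))=(f_{i(F)}(C),\sigma(F))$. SAW requirement: for $C\in(\mathbb{Z}/4\mathbb{Z})^{\mathsf{N}}$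 let $p(C)=(X_0,\dots,X_{\mathsf{N}})\in(\mathbb{Z}^2)^{\mathsf{N}+1}$ with $X_0=(0,0)$ and $X_i=X_{i-1}+v(C_i)$, where $v(0)=(1,0)$, $v(1)=(0,-1)$, $v(2)=(-1,0)$, $v(3)=(0,1)$. $C$ satisfies the SAW requirement iff the points $X_0,\dots,X_{\mathsf{N}}$ are pairwise distinct. Let $\mathfrak{C}_{\mathsf{N}}$ be the set of $C\in(\mathbb{Z}/4\mathbb{Z})^{\mathsf{N}}$ for which there exist $n\ge1$ and $k_1,\dots,k_n\in\llbracket -\mathsf{N};\mathsf{N}\rrbracket$ such that $C$ is the first component of $G^n(((0,\dots,0),(k_1,\dots,k_n)))$ and, for every $i\le n$, the first component of $G^i(((0,\dots,0),(k_1,\dots,k_n)))$ satisfies the SAW requirement. Let $\mathcal{X}=\mathfrak{C}_{\mathsf{N}}\times\llbracket -\mathsf{N};\mathsf{N}\rrbracket^{\mathbb{N}}$ with metric $d((C,F),(\check C,\check F))=d_C(C,\check C)+d_F(F,\check F)$, where $d_C(C,\check C)=\sum_{k=1}^{\mathsf{N}}\delta(C_k,\check C_k)2^{\mathsf{N}-k}$ ($\delta(a,b)=0$ if $a=b$, $1$ otherwise) and $d_F(F,\check F)=\frac{9}{2\mathsf{N}}\sum_{k=0}^{\infty}\frac{|F^k-\check F^k|}{10^{k+1}}$. The paper regards $G$ as a self-map of $\mathcal{X}$. *)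

From Stdlib Require Import Reals ZArith List.
From Coquelicot Require Import Coquelicot.
Import ListNotations.
Open Scope R_scope.

(* A configuration C in (Z/4Z)^N is a list of N integers in {0,1,2,3};
   C_i (1 <= i <= N) is [nth (i-1) C 0]. *)
Definition Conf := list Z.

(* f^{sign k} applied to coordinates |k|, ..., N (0-based index i >= |k|-1). *)
Definition fk (k : Z) (C : Conf) : Conf :=
  map (fun ic : nat * Z =>
         let (i, c) := ic in
         if Z.leb (Z.abs k) (Z.of_nat i + 1) then Z.modulo (c + Z.sgn k) 4 else c)
      (combine (seq 0 (length C)) C).

Definition vstep (c : Z) : Z * Z :=
  match c with
  | 0%Z => (1, 0)%Z
  | 1%Z => (0, -1)%Z
  | 2%Z => (-1, 0)%Z
  | _ => (0, 1)%Z
  end.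

Fixpoint path_from (X : Z * Z) (C : Conf) : list (Z * Z) :=
  match C with
  | [] => [X]
  | c :: C' => X :: path_from ((fst X + fst (vstep c))%Z, (snd X + snd (vstep c))%Z) C'
  end.

Definition SAW (C : Conf) : Prop := NoDup (path_from (0%Z, 0%Z) C).

Definition zeros (N : nat) : Conf := repeat 0%Z N.

(* first component of G^i((0,...,0),(k_1,...,k_n)) = f_{k_i} o ... o f_{k_1} (0) *)
Definition apply_folds (ks : list Z) (C : Conf) : Conf :=
  fold_left (fun C k => fk k C) ks C.

Definition in_range (N : nat) (k : Z) : Prop := (- Z.of_nat N <= k <= Z.of_nat N)%Z.

Definition frakC (N : nat) (C : Conf) : Prop :=
  exists ks : list Z,
    (1 <= length ks)%nat /\ List.Forall (in_range N) ks /\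
    C = apply_folds ks (zeros N) /\
    (forall i, (i <= length ks)%nat -> SAW (apply_folds (firstn i ks) (zeros N))).

Definition Fold := nat -> Z.
Definition is_fold (N : nat) (F : Fold) : Prop := forall j, in_range N (F j).

Definition Pt := (Conf * Fold)%type.

Definition inX (N : nat) (x : Pt) : Prop := frakC N (fst x) /\ is_fold N (snd x).

Definition G (x : Pt) : Pt := (fk (snd x 0%nat) (fst x), fun j => snd x (S j)).

Definition delta (a b : Z) : R := if Z.eqb a b then 0 else 1.

Definition dC (N : nat) (C C' : Conf) : R :=
  fold_right Rplus 0
    (map (fun k => delta (nth (k - 1) C 0%Z) (nth (k - 1) C' 0%Z) * 2 ^ (N - k))
         (seq 1 N)).

Definition dF (N : nat) (F F' : Fold) : R :=
  9 / (2 * INR N) * Series (fun k => IZR (Z.abs (F k - F' k)) / 10 ^ (S k)).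

Definition d (N : nat) (x y : Pt) : R := dC N (fst x) (fst y) + dF N (snd x) (snd y).

(* If d(x, y) is small, then y has the same configuration as x (two distinct
   configurations are at d_C-distance at least 1) and the same first fold
   (distinct first folds are at d_F-distance at least 9/(20N)).  Then G x and
   G y share their configuration, and dropping a common first fold multiplies
   d_F by 10, so d(G x, G y) = 10 d(x, y) near x. *)
From Stdlib Require Import Reals ZArith List Lia Lra.
From Coquelicot Require Import Coquelicot.
Open Scope R_scope.

Lemma length_fk k C : length (fk k C) = length C.
Proof. unfold fk. rewrite length_map, length_combine, length_seq. lia. Qed.

Lemma length_apply_folds ks C : length (apply_folds ks C) = length C.
Proof.
  unfold apply_folds; revert C.
  induction ks as [|k ks IH]; intros C; simpl; [easy|].
  now rewrite IH, length_fk.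
Qed.

Lemma frakC_length N C : frakC N C -> length C = N.
Proof.
  intros (ks & _ & _ & -> & _).
  now rewrite length_apply_folds; apply repeat_length.
Qed.

Section ListSum.

Variables (A : Type) (g : A -> R).
Hypothesis g_nonneg : forall a, 0 <= g a.

Lemma sum_map_nonneg l : 0 <= fold_right Rplus 0 (map g l).
Proof. induction l as [|a l IH]; simpl; [lra|]. specialize (g_nonneg a); lra. Qed.

Lemma sum_map_ge_In l a : In a l -> g a <= fold_right Rplus 0 (map g l).
Proof.
  induction l as [|b l IH]; simpl; [tauto|]. intros [<- | Hin].
  - pose proof (sum_map_nonneg l); lra.
  - specialize (IH Hin); specialize (g_nonneg b); lra.
Qed.

End ListSum.

Lemma sum_map_zero {A : Type} (g : A -> R) l :
  (forall a, g a = 0) -> fold_right Rplus 0 (map g l) = 0.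
Proof. intros H; induction l as [|a l IH]; simpl; [lra|]. rewrite H, IH; lra. Qed.

Lemma delta_nonneg a b : 0 <= delta a b.
Proof. unfold delta; destruct (Z.eqb a b); lra. Qed.

Lemma dC_term_nonneg N C C' k :
  0 <= delta (nth (k - 1) C 0%Z) (nth (k - 1) C' 0%Z) * 2 ^ (N - k).
Proof. apply Rmult_le_pos; [apply delta_nonneg | apply pow_le; lra]. Qed.

Lemma dC_nonneg N C C' : 0 <= dC N C C'.
Proof. apply sum_map_nonneg, dC_term_nonneg. Qed.

Lemma dC_diag N C : dC N C C = 0.
Proof. apply sum_map_zero; intros k; unfold delta; rewrite Z.eqb_refl; lra. Qed.

Lemma dC_lt1_eq N C C' :
  length C = N -> length C' = N -> dC N C C' < 1 -> C = C'.
Proof.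
  intros HC HC' Hd. apply nth_ext with (d := 0%Z) (d' := 0%Z); [lia|].
  intros k Hk.
  assert (Hin : In (S k) (seq 1 N)) by (apply in_seq; lia).
  pose proof (sum_map_ge_In _ _ (dC_term_nonneg N C C') _ _ Hin) as Hterm.
  fold (dC N C C') in Hterm; cbv beta in Hterm.
  replace (S k - 1)%nat with k in Hterm by lia.
  unfold delta in Hterm.
  destruct (Z.eqb_spec (nth k C 0%Z) (nth k C' 0%Z)) as [E | E]; [easy|].
  assert (1 <= 2 ^ (N - S k)) by (apply pow_R1_Rle; lra). lra.
Qed.

Definition fold_gap (F F' : Fold) (k : nat) : R :=
  IZR (Z.abs (F k - F' k)) / 10 ^ (S k).

Lemma fold_gap_nonneg F F' k : 0 <= fold_gap F F' k.
Proof. apply Rdiv_le_0_compat; [apply IZR_le; lia | apply pow_lt; lra]. Qed.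

Lemma ex_series_fold_gap (M : Z) F F' :
  (forall k, (Z.abs (F k - F' k) <= M)%Z) -> ex_series (fold_gap F F').
Proof.
  intros HM.
  apply (@ex_series_le R_AbsRing R_CompleteNormedModule _
           (fun k => (/ 10) ^ k * IZR M)).
  - intros k. change (norm (fold_gap F F' k)) with (Rabs (fold_gap F F' k)).
    rewrite Rabs_pos_eq by apply fold_gap_nonneg.
    unfold fold_gap. rewrite pow_inv.
    assert (Hgap : IZR (Z.abs (F k - F' k)) <= IZR M) by apply IZR_le, HM.
    assert (0 <= IZR (Z.abs (F k - F' k))) by (apply IZR_le; lia).
    assert (0 < 10 ^ k) by (apply pow_lt; lra).
    simpl; unfold Rdiv; rewrite Rinv_mult.
    apply Rmult_le_reg_l with (10 ^ k); [easy|].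
    field_simplify; [|lra|lra]. unfold Rdiv. nra.
  - apply ex_series_scal_r, ex_series_geom. rewrite Rabs_pos_eq; lra.
Qed.

Lemma ex_series_fold_gap_is_fold N F F' :
  is_fold N F -> is_fold N F' -> ex_series (fold_gap F F').
Proof.
  intros HF HF'. apply (ex_series_fold_gap (2 * Z.of_nat N)).
  intros k; specialize (HF k); specialize (HF' k); unfold in_range in *; lia.
Qed.

Lemma Series_nonneg a : ex_series a -> (forall k, 0 <= a k) -> 0 <= Series a.
Proof.
  intros Ha Hnonneg.
  replace 0 with (Series (fun k => 0 * a k)) by (rewrite Series_scal_l; ring).
  apply Series_le; [|easy]. intros k; rewrite Rmult_0_l; auto with real.
Qed.

Section FoldDistance.

Variables (N : nat) (F F' : Fold).
Hypotheses (HN : (1 <= N)%nat) (HF : is_fold N F) (HF' : is_fold N F').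

Let INR_N_ge1 : 1 <= INR N.
Proof. now apply (le_INR 1). Qed.

Let ex_gap : ex_series (fold_gap F F').
Proof. now apply (ex_series_fold_gap_is_fold N). Qed.

Let tail_nonneg : 0 <= Series (fun k => fold_gap F F' (S k)).
Proof.
  apply Series_nonneg; [|intros; apply fold_gap_nonneg].
  apply (ex_series_incr_1 (fold_gap F F')), ex_gap.
Qed.

Lemma dF_nonneg : 0 <= dF N F F'.
Proof.
  pose proof INR_N_ge1.
  apply Rmult_le_pos; [apply Rdiv_le_0_compat; lra|].
  apply Series_nonneg; [exact ex_gap | apply fold_gap_nonneg].
Qed.

(* The first fold alone contributes 9/(2N) * |F^0 - F'^0| / 10. *)
Lemma dF_head_neq : F 0%nat <> F' 0%nat -> 9 / (20 * INR N) <= dF N F F'.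
Proof.
  intros Hhead. pose proof INR_N_ge1; pose proof tail_nonneg.
  unfold dF. fold (fold_gap F F').
  rewrite (Series_incr_1 _ ex_gap).
  assert (1 <= IZR (Z.abs (F 0%nat - F' 0%nat))) by (apply IZR_le; lia).
  unfold fold_gap at 1; simpl pow.
  replace (9 / (20 * INR N)) with (9 / (2 * INR N) * (1 / (10 * 1))) by (field; lra).
  apply Rmult_le_compat_l; [apply Rdiv_le_0_compat; lra|].
  unfold Rdiv; lra.
Qed.

Lemma dF_shift : F 0%nat = F' 0%nat ->
  dF N (fun j => F (S j)) (fun j => F' (S j)) = 10 * dF N F F'.
Proof.
  intros Hhead. unfold dF. fold (fold_gap F F').
  rewrite (Series_incr_1 _ ex_gap).
  unfold fold_gap at 1; rewrite Hhead, Z.sub_diag; simpl (Z.abs 0).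
  rewrite (Series_ext _ (fun k => 10 * fold_gap F F' (S k))), Series_scal_l.
  - unfold Rdiv at 3; ring.
  - intros k; unfold fold_gap; simpl.
    field; repeat split; try apply pow_nonzero; lra.
Qed.

End FoldDistance.

Theorem mainTheorem1 (N : nat) (HN : (1 <= N)%nat) :
  forall x : Pt, inX N x ->
  forall eps : R, 0 < eps ->
  exists del : R, 0 < del /\
    forall y : Pt, inX N y -> d N x y < del -> d N (G x) (G y) < eps.
Proof.
  intros [C F] [HC HF] eps Heps.
  assert (HNpos : 0 < INR N) by (apply lt_0_INR; lia).
  set (r := 9 / (20 * INR N)).
  assert (Hr : 0 < r) by (apply Rdiv_lt_0_compat; lra).
  exists (Rmin 1 (Rmin r (eps / 10))); split.
  { apply Rmin_pos; [lra | apply Rmin_pos; lra]. }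
  intros [C' F'] [HC' HF'] Hd; unfold d in Hd |- *; simpl in *.
  pose proof (Rmin_l 1 (Rmin r (eps / 10))).
  pose proof (Rmin_r 1 (Rmin r (eps / 10))).
  pose proof (Rmin_l r (eps / 10)); pose proof (Rmin_r r (eps / 10)).
  pose proof (dC_nonneg N C C'); pose proof (dF_nonneg N F F' HN HF HF').
  assert (HCC' : C = C').
  { apply (dC_lt1_eq N); [now apply frakC_length .. | lra]. }
  assert (Hhead : F 0%nat = F' 0%nat).
  { destruct (Z.eq_dec (F 0%nat) (F' 0%nat)) as [E | E]; [easy|].
    pose proof (dF_head_neq N F F' HN HF HF' E) as Hfar; fold r in Hfar; lra. }
  subst C'. rewrite Hhead, dC_diag, (dF_shift N F F' HF HF' Hhead). lra.
Qed.
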